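(* Let $g:\mathbb{R}\to\mathbb{R}$ be differentiable, $c_0>0$, $G(t)=\int_0^tg(s)\,ds$, assume $\int_{-\infty}^\infty e^{-c_0G(t)}dt<\infty$, let $c_1 = 1/\int_{-\infty}^\infty e^{-c_0G(t)}dt$, and let $Y$ have density $p(t)=c_1e^{-c_0G(t)}$ on $\mathbb{R}$ with distribution function $F(x)=P(Y\le x)$. Assume: (H1) $g$ is non-decreasing, $g(t)\ge 0$ for $t>0$ and $g(t)\le 0$ for $t\le 0$; (H2) there is $c_2<\infty$ such that for all $x$, $\min\big(1/c_1, 1/|c_0 g(x)|\big)\,(|x| + 3/c_1)\,\max(1, c_0|g'(x)|) \le c_2$. Then for all real $x$: $$\min(1-F(x),F(x))\le d_1p(x),\qquad |p'(x)|\min(F(x),1-F(x))\le d_2p^2(x),$$ $$M(x)\,\big|(p'/p)'(x)\big|\le d_3p(x),\qquad M(x)\le d_4p(x),$$ with $d_1=1/c_1$, $d_2=1$, $d_3=c_2$, $d_4=c_2$, where $$M(x)=\min\Big(E|Y|I_{\{Y\le x\}}+E|Y|\,F(x),\; E|Y|I_{\{Y>x\}}+E|Y|\,(1-F(x))\Big).$$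
   Context: In (H2), $1/|c_0g(x)|$ is interpreted as $+\infty$ when $g(x)=0$. $I_A$ denotes the indicator of the event $A$. *)

From Stdlib Require Import Reals.
From Coquelicot Require Import Coquelicot.
Open Scope R_scope.

Definition Gint (g : R -> R) (t : R) : R := RInt g 0 t.

Definition udens (c0 : R) (g : R -> R) (t : R) : R := exp (- (c0 * Gint g t)).

Definition Zc (c0 : R) (g : R -> R) : R :=
  RInt_gen (udens c0 g) (Rbar_locally m_infty) (Rbar_locally p_infty).

Definition cnorm (c0 : R) (g : R -> R) : R := / Zc c0 g.

Definition dens (c0 : R) (g : R -> R) (t : R) : R := cnorm c0 g * udens c0 g t.

Definition cdf (c0 : R) (g : R -> R) (x : R) : R :=
  RInt_gen (dens c0 g) (Rbar_locally m_infty) (at_point x).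

Definition EabsY (c0 : R) (g : R -> R) : R :=
  RInt_gen (fun t => Rabs t * dens c0 g t) (Rbar_locally m_infty) (Rbar_locally p_infty).

Definition EabsY_le (c0 : R) (g : R -> R) (x : R) : R :=
  RInt_gen (fun t => Rabs t * dens c0 g t) (Rbar_locally m_infty) (at_point x).

Definition EabsY_gt (c0 : R) (g : R -> R) (x : R) : R :=
  RInt_gen (fun t => Rabs t * dens c0 g t) (at_point x) (Rbar_locally p_infty).

Definition Mfun (c0 : R) (g : R -> R) (x : R) : R :=
  Rmin (EabsY_le c0 g x + EabsY c0 g * cdf c0 g x)
       (EabsY_gt c0 g x + EabsY c0 g * (1 - cdf c0 g x)).

(* min(1/c1, 1/|c0 g(x)|), with 1/|c0 g(x)| = +oo when g(x) = 0 *)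
Definition minfac (c0 : R) (g : R -> R) (x : R) : R :=
  if Req_EM_T (g x) 0 then / cnorm c0 g
  else Rmin (/ cnorm c0 g) (/ Rabs (c0 * g x)).

(* The density p = c1 e^(-c0 G) satisfies p' = - c0 g p with c0 g nondecreasing, and G is
   superadditive on each half-line, so p (x + s) <= p x p s / c1 when x and s have the same sign.
   For the right tail T x = P (Y > x) with x >= 0 this gives T x <= T 0 p x / c1 (compare with
   the tail at 0 shifted by x), and integrating - p' = c0 g p >= c0 g x p over [x, +oo) gives
   c0 g x T x <= p x.  Integration by parts bounds E |Y| I_{Y > x} by (x + m) T x as soon as
   T <= m p beyond x; in particular the two halves of E |Y| are at most A^2 / c1 and B^2 / c1,
   where A + B = 1 are the two tails at 0, so E |Y| <= 1 / c1.  For x <= 0 the same argument runs on the reflected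
   density p (- s), whose right tail is F. *)

From Stdlib Require Import Reals Lra.
From Coquelicot Require Import Coquelicot.
Open Scope R_scope.

Lemma ex_RInt_cont (h : R -> R) a b : (forall t, continuous h t) -> ex_RInt h a b.
Proof. intros; apply (ex_RInt_continuous (V:=R_CompleteNormedModule)); auto. Qed.

Lemma RInt_scal_cont (f : R -> R) a b c : (forall t, continuous f t) ->
  RInt (fun s => c * f s) a b = c * RInt f a b.
Proof. intros; apply (RInt_scal f a b c); apply ex_RInt_cont; auto. Qed.

Lemma filterlim_incr_bounded (F : R -> R) x K :
  (forall b1 b2, x <= b1 -> b1 <= b2 -> F b1 <= F b2) ->
  (forall b, x <= b -> F b <= K) ->
  exists l, l <= K /\ (forall b, x <= b -> F b <= l) /\
    filterlim F (Rbar_locally p_infty) (locally l).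
Proof.
  intros Hincr HK.
  set (E := fun y => exists b, x <= b /\ y = F b).
  assert (E_bound : bound E) by (exists K; intros y [b [Hb ->]]; auto).
  assert (E_inhab : exists y, E y) by (exists (F x), x; split; [lra | auto]).
  destruct (completeness E E_bound E_inhab) as [l [l_ub l_lub]].
  exists l; split; [|split].
  - apply l_lub; intros y [b [Hb ->]]; auto.
  - intros b Hb; apply l_ub; exists b; auto.
  - apply filterlim_locally; intros eps.
    assert (close : exists b0, x <= b0 /\ l - eps < F b0).
    { apply Classical_Prop.NNPP; intros Hnot.
      assert (l <= l - eps) by
        (apply l_lub; intros y [b [Hb ->]]; apply Rnot_lt_le; intros Hlt; apply Hnot; eauto).
      destruct eps; simpl in *; lra. }
    destruct close as [b0 [Hb0 Hlt]].
    exists b0; intros b Hb.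
    assert (F b0 <= F b) by (apply Hincr; lra).
    assert (F b <= l) by (apply l_ub; exists b; split; [lra | auto]).
    apply Rabs_lt_between'; lra.
Qed.

Lemma is_RInt_gen_p_infty_of_lim (h : R -> R) x l :
  (forall t, continuous h t) ->
  filterlim (fun b => RInt h x b) (Rbar_locally p_infty) (locally l) ->
  is_RInt_gen h (at_point x) (Rbar_locally p_infty) l.
Proof.
  intros Hc Hl.
  apply (filterlimi_lim_ext_loc (fun ab : R * R => RInt h (fst ab) (snd ab))
           (fun ab : R * R => is_RInt h (fst ab) (snd ab))).
  - apply filter_forall; intros [a b]; apply (RInt_correct h a b), ex_RInt_cont; auto.
  - intros P HP.
    apply Filter_prod with (Q := fun a => a = x) (R := fun b => P (RInt h x b)).
    + reflexivity.
    + exact (Hl P HP).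
    + intros a b -> Hb; exact Hb.
Qed.

Lemma is_RInt_gen_m_infty_of_lim (h : R -> R) x l :
  (forall t, continuous h t) ->
  filterlim (fun a => RInt h a x) (Rbar_locally m_infty) (locally l) ->
  is_RInt_gen h (Rbar_locally m_infty) (at_point x) l.
Proof.
  intros Hc Hl.
  apply (filterlimi_lim_ext_loc (fun ab : R * R => RInt h (fst ab) (snd ab))
           (fun ab : R * R => is_RInt h (fst ab) (snd ab))).
  - apply filter_forall; intros [a b]; apply (RInt_correct h a b), ex_RInt_cont; auto.
  - intros P HP.
    apply Filter_prod with (Q := fun a => P (RInt h a x)) (R := fun b => b = x).
    + exact (Hl P HP).
    + reflexivity.
    + intros a b Ha ->; exact Ha.
Qed.

Lemma lim_of_is_RInt_gen_p_infty (h : R -> R) x l :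
  is_RInt_gen h (at_point x) (Rbar_locally p_infty) l ->
  filterlim (fun b => RInt h x b) (Rbar_locally p_infty) (locally l).
Proof.
  intros H.
  apply filterlim_locally; intros eps.
  destruct (proj1 (filterlimi_locally _ _) H eps) as [Q R' HQ HR Hball].
  apply (filter_imp R'); auto.
  intros b Rb; destruct (Hball x b HQ Rb) as [z [Hz Hb]].
  rewrite (is_RInt_unique h x b z Hz); exact Hb.
Qed.

Lemma RInt_le_is_RInt_gen (h : R -> R) Z :
  (forall t, 0 <= h t) -> (forall t, continuous h t) ->
  is_RInt_gen h (Rbar_locally m_infty) (Rbar_locally p_infty) Z ->
  forall a b, a <= b -> RInt h a b <= Z.
Proof.
  intros Hpos Hc HZ a b Hab.
  apply Rnot_lt_le; intros Hlt.
  assert (He : 0 < RInt h a b - Z) by lra.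
  destruct (proj1 (filterlimi_locally _ _) HZ (mkposreal _ He))
    as [Q R' [M1 HQ] [M2 HR] Hball].
  set (a' := Rmin a (M1 - 1)); set (b' := Rmax b (M2 + 1)).
  assert (a' <= a) by apply Rmin_l.
  assert (b <= b') by apply Rmax_l.
  assert (Ha' : a' < M1) by (unfold a'; pose proof (Rmin_r a (M1 - 1)); lra).
  assert (Hb' : M2 < b') by (unfold b'; pose proof (Rmax_r b (M2 + 1)); lra).
  destruct (Hball a' b' (HQ _ Ha') (HR _ Hb')) as [z [Hz Hclose]].
  rewrite <- (is_RInt_unique h a' b' z Hz) in Hclose.
  apply Rabs_lt_between' in Hclose; simpl in Hclose.
  assert (RInt h a b <= RInt h a' b').
  { rewrite <- (RInt_Chasles h a' a b'), <- (RInt_Chasles h a b b')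
      by (apply ex_RInt_cont; auto).
    assert (0 <= RInt h a' a) by (apply RInt_ge_0; auto; apply ex_RInt_cont; auto).
    assert (0 <= RInt h b b') by (apply RInt_ge_0; auto; apply ex_RInt_cont; auto).
    simpl; unfold plus; simpl; lra. }
  lra.
Qed.

Definition tail (h : R -> R) (x : R) : R := RInt_gen h (at_point x) (Rbar_locally p_infty).

Lemma tail_spec (h : R -> R) x K :
  (forall t, continuous h t) -> (forall t, x <= t -> 0 <= h t) ->
  (forall b, x <= b -> RInt h x b <= K) ->
  is_RInt_gen h (at_point x) (Rbar_locally p_infty) (tail h x) /\
  0 <= tail h x /\ tail h x <= K /\ (forall b, x <= b -> RInt h x b <= tail h x).
Proof.
  intros Hc Hpos HK.
  assert (Hincr : forall b1 b2, x <= b1 -> b1 <= b2 -> RInt h x b1 <= RInt h x b2).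
  { intros b1 b2 H1 H2.
    rewrite <- (RInt_Chasles h x b1 b2) by (apply ex_RInt_cont; auto).
    assert (0 <= RInt h b1 b2)
      by (apply RInt_ge_0; auto; [apply ex_RInt_cont; auto | intros; apply Hpos; lra]).
    simpl; unfold plus; simpl; lra. }
  destruct (filterlim_incr_bounded _ x K Hincr HK) as [l [HlK [Hle Hlim]]].
  assert (Hl : is_RInt_gen h (at_point x) (Rbar_locally p_infty) l)
    by (apply is_RInt_gen_p_infty_of_lim; auto).
  replace (tail h x) with l by (symmetry; apply (is_RInt_gen_unique h l Hl)).
  pose proof (Hle x (Rle_refl x)) as Htail0; rewrite RInt_point in Htail0.
  repeat split; auto.
Qed.

Lemma tail_Chasles (h : R -> R) x y :
  (forall t, continuous h t) ->
  is_RInt_gen h (at_point y) (Rbar_locally p_infty) (tail h y) ->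
  tail h x = RInt h x y + tail h y.
Proof.
  intros Hc Hy.
  assert (Hxy : is_RInt_gen h (at_point x) (at_point y) (RInt h x y))
    by (apply is_RInt_gen_at_point, (RInt_correct h x y), ex_RInt_cont; auto).
  exact (is_RInt_gen_unique h _ (is_RInt_gen_Chasles h y _ _ Hxy Hy)).
Qed.

Lemma RInt_reflect (f : R -> R) a b :
  (forall t, continuous f t) -> RInt (fun s => f (- s)) a b = RInt f (- b) (- a).
Proof.
  intros Hc.
  assert (Hlin := RInt_comp_lin f (-1) 0 a b).
  replace (-1 * a + 0) with (- a) in Hlin by ring.
  replace (-1 * b + 0) with (- b) in Hlin by ring.
  rewrite <- (opp_RInt_swap f (- a) (- b)), <- Hlin by (apply ex_RInt_cont; auto).
  rewrite <- RInt_opp.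
  2:{ apply (ex_RInt_comp_lin f (-1) 0 a b).
      replace (-1 * a + 0) with (- a) by ring; replace (-1 * b + 0) with (- b) by ring.
      apply ex_RInt_cont; auto. }
  apply RInt_ext; intros t _.
  replace (-1 * t + 0) with (- t) by ring.
  unfold scal, opp; simpl; unfold mult; simpl; ring.
Qed.

Lemma is_RInt_gen_reflect (f : R -> R) y l :
  (forall t, continuous f t) ->
  is_RInt_gen (fun s => f (- s)) (at_point (- y)) (Rbar_locally p_infty) l ->
  is_RInt_gen f (Rbar_locally m_infty) (at_point y) l.
Proof.
  intros Hc H.
  apply is_RInt_gen_m_infty_of_lim; auto.
  apply lim_of_is_RInt_gen_p_infty in H.
  assert (Hopp := filterlim_Rbar_opp m_infty).
  eapply filterlim_ext; [| exact (filterlim_comp _ _ _ _ _ _ _ _ Hopp H)].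
  intros a; simpl; rewrite RInt_reflect, !Ropp_involutive by auto; reflexivity.
Qed.

(* Only the restriction of [q] to [0, +oo) matters; in the application [q] is [p] or [p (- s)],
   [k] is [c0 g] or [- c0 g (- s)] and [Z = 1 / c1]. *)
Record log_concave_density (q k : R -> R) (Z : R) : Prop := {
  density_pos : forall t, 0 < q t;
  density_deriv : forall t, is_derive q t (- (k t * q t));
  rate_cont : forall t, continuous k t;
  rate_incr : forall s t, s <= t -> k s <= k t;
  norm_const_pos : 0 < Z;
  density_submult : forall x s, 0 <= x -> 0 <= s -> q (x + s) <= Z * q x * q s;
  RInt_density_le_1 : forall a b, a <= b -> RInt q a b <= 1 }.

(* [min Z (1 / |a|)] with [1 / |0| = +oo]. *)
Definition min_inv (Z a : R) : R := if Req_EM_T a 0 then Z else Rmin Z (/ Rabs a).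

Lemma min_inv_bounds Z a : 0 < Z -> 0 <= min_inv Z a <= Z.
Proof.
  intros HZ; unfold min_inv; destruct (Req_EM_T a 0) as [|Ha]; [lra |].
  assert (0 < / Rabs a) by (apply Rinv_0_lt_compat, Rabs_pos_lt; auto).
  unfold Rmin; destruct (Rle_dec Z (/ Rabs a)); lra.
Qed.

Lemma min_inv_opp Z a : min_inv Z (- a) = min_inv Z a.
Proof.
  unfold min_inv; destruct (Req_EM_T (- a) 0), (Req_EM_T a 0); try lra.
  rewrite Rabs_Ropp; reflexivity.
Qed.

Section LogConcaveTail.

Variables (q k : R -> R) (Z : R).
Hypothesis hq : log_concave_density q k Z.

Let q_pos := density_pos q k Z hq.

Lemma density_cont t : continuous q t.
Proof.
  apply (ex_derive_continuous (K:=R_AbsRing) (V:=R_NormedModule)).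
  exists (- (k t * q t)); apply (density_deriv _ _ _ hq).
Qed.

Lemma tail_density x :
  is_RInt_gen q (at_point x) (Rbar_locally p_infty) (tail q x) /\
  0 <= tail q x /\ tail q x <= 1 /\ (forall b, x <= b -> RInt q x b <= tail q x).
Proof.
  apply tail_spec; [exact density_cont | intros; left; auto |].
  intros; apply (RInt_density_le_1 _ _ _ hq); auto.
Qed.

Lemma tail_density_deriv t : is_derive (tail q) t (- q t).
Proof.
  apply (is_derive_ext (fun t => tail q 0 - RInt q 0 t)).
  { intros s; rewrite (tail_Chasles q 0 s density_cont (proj1 (tail_density s))); simpl; ring. }
  replace (- q t) with (0 - q t) by ring.
  apply (is_derive_minus (fun _ => tail q 0) (RInt q 0)); [apply (is_derive_const (tail q 0)) |].
  apply (is_derive_RInt q (RInt q 0) 0 t); [| apply density_cont].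
  apply filter_forall; intros b; apply (RInt_correct q 0 b), ex_RInt_cont, density_cont.
Qed.

Lemma tail_density_cont t : continuous (tail q) t.
Proof.
  apply (ex_derive_continuous (K:=R_AbsRing) (V:=R_NormedModule)).
  exists (- q t); apply tail_density_deriv.
Qed.

Lemma tail_density_le_submult x : 0 <= x -> tail q x <= Z * tail q 0 * q x.
Proof.
  intros Hx.
  apply (tail_spec q x _ density_cont); [intros; left; auto |].
  intros b Hb.
  assert (Hshift := RInt_comp_lin q 1 x 0 (b - x)).
  replace (1 * 0 + x) with x in Hshift by ring.
  replace (1 * (b - x) + x) with b in Hshift by ring.
  rewrite <- Hshift by (apply ex_RInt_cont, density_cont).
  rewrite (RInt_ext _ (fun s => q (x + s)))
    by (intros s _; unfold scal; simpl; unfold mult; simpl;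
        rewrite Rmult_1_l; f_equal; ring).
  assert (Hcs : forall s, continuous (fun s => q (x + s)) s).
  { intros s; apply (continuous_comp (fun s => x + s) q); [| apply density_cont].
    apply (ex_derive_continuous (K:=R_AbsRing) (V:=R_NormedModule)); auto_derive; exact I. }
  assert (Hcq : forall s, continuous (fun s => Z * q x * q s) s)
    by (intros s; apply (continuous_mult (fun _ => Z * q x) q);
        [apply continuous_const | apply density_cont]).
  apply Rle_trans with (RInt (fun s => Z * q x * q s) 0 (b - x)).
  - apply RInt_le; [lra | apply ex_RInt_cont; auto | apply ex_RInt_cont; auto |].
    intros s Hs; apply (density_submult _ _ _ hq); lra.
  - rewrite (RInt_scal_cont q 0 (b - x) (Z * q x) density_cont).
    assert (0 <= Z * q x) by (pose proof (norm_const_pos _ _ _ hq); pose proof (q_pos x); nra).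
    replace (Z * tail q 0 * q x) with (Z * q x * tail q 0) by ring.
    apply Rmult_le_compat_l; [auto | apply (tail_density 0); lra].
Qed.

Lemma tail_density_le x : 0 <= x -> tail q x <= Z * q x.
Proof.
  intros Hx.
  assert (Z * tail q 0 * q x <= Z * 1 * q x).
  { pose proof (norm_const_pos _ _ _ hq); pose proof (q_pos x).
    pose proof (tail_density 0); apply Rmult_le_compat_r; [lra |].
    apply Rmult_le_compat_l; lra. }
  pose proof (tail_density_le_submult x Hx); lra.
Qed.

Lemma rate_mul_tail_le x : k x * tail q x <= q x.
Proof.
  destruct (Rle_lt_dec (k x) 0) as [Hk | Hk].
  { pose proof (tail_density x); pose proof (q_pos x); nra. }
  assert (Hkq : forall t, continuous (fun t => k t * q t) t)
    by (intros t; apply (continuous_mult k q); [apply (rate_cont _ _ _ hq) | apply density_cont]).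
  assert (Htail : tail q x <= q x / k x).
  { apply (tail_spec q x _ density_cont); [intros; left; auto |].
    intros b Hb.
    assert (Hftc : RInt (fun t => k t * q t) x b = q x - q b).
    { assert (Hd : forall t, is_derive (fun t => - q t) t (k t * q t)).
      { intros t; replace (k t * q t) with (- - (k t * q t)) by ring.
        apply (is_derive_opp q), (density_deriv _ _ _ hq). }
      rewrite (is_RInt_unique _ _ _ _
                 (is_RInt_derive (fun t => - q t) _ x b (fun t _ => Hd t) (fun t _ => Hkq t))).
      unfold minus, plus, opp; simpl; ring. }
    assert (Hle : RInt (fun t => k x * q t) x b <= RInt (fun t => k t * q t) x b).
    { apply RInt_le; auto; try (apply ex_RInt_cont; auto).
      - intros t; apply (continuous_mult (fun _ => k x) q); [apply continuous_const | apply density_cont].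
      - intros t Ht; apply Rmult_le_compat_r; [left; auto | apply (rate_incr _ _ _ hq); lra]. }
    rewrite (RInt_scal_cont q x b (k x) density_cont), Hftc in Hle.
    pose proof (q_pos b).
    apply (Rmult_le_reg_l (k x)); auto.
    field_simplify; lra. }
  apply (Rmult_le_compat_l (k x)) in Htail; [| lra].
  field_simplify in Htail; lra.
Qed.

Lemma tail_density_le_min_inv y :
  0 <= y -> 0 <= k y -> forall t, y <= t -> tail q t <= min_inv Z (k y) * q t.
Proof.
  intros Hy Hky t Hyt.
  unfold min_inv; destruct (Req_EM_T (k y) 0) as [| Hk0]; [apply tail_density_le; lra |].
  assert (Hk : 0 < k y) by lra.
  assert (k y * tail q t <= q t).
  { pose proof (rate_mul_tail_le t); pose proof (tail_density t).
    assert (k y <= k t) by (apply (rate_incr _ _ _ hq); auto). nra. }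
  rewrite Rabs_pos_eq by lra.
  unfold Rmin; destruct (Rle_dec Z (/ k y)); [apply tail_density_le; lra |].
  apply (Rmult_le_reg_l (k y)); auto.
  rewrite <- Rmult_assoc, Rinv_r, Rmult_1_l; lra.
Qed.

Lemma abs_density_cont t : continuous (fun t => Rabs t * q t) t.
Proof. apply (continuous_mult Rabs q); [apply continuous_Rabs | apply density_cont]. Qed.

(* Integration by parts against [(t - x) * tail q t], whose derivative is [tail q t - (t - x) * q t]. *)
Lemma RInt_shift_mul_density x b :
  RInt (fun t => (t - x) * q t) x b = RInt (tail q) x b - (b - x) * tail q b.
Proof.
  assert (Hlin : forall t, continuous (fun t => t - x) t).
  { intros t; apply (ex_derive_continuous (K:=R_AbsRing) (V:=R_NormedModule)).
    auto_derive; exact I. }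
  assert (Hc : forall t, continuous (fun t => (t - x) * q t) t)
    by (intros t; apply (continuous_mult (fun t => t - x) q); auto; apply density_cont).
  assert (Hd : forall t, is_derive (fun t => (t - x) * tail q t) t (tail q t - (t - x) * q t)).
  { intros t.
    replace (tail q t - (t - x) * q t) with (1 * tail q t + (t - x) * (- q t)) by ring.
    apply (is_derive_mult (fun t => t - x) (tail q)); [| apply tail_density_deriv | intros; apply Rmult_comm].
    auto_derive; [exact I | ring]. }
  assert (Hdc : forall t, continuous (fun t => tail q t - (t - x) * q t) t)
    by (intros t; apply (continuous_minus (tail q)); auto; apply tail_density_cont).
  assert (Hparts := is_RInt_unique _ _ _ _
                      (is_RInt_derive _ _ x b (fun t _ => Hd t) (fun t _ => Hdc t))).
  rewrite (RInt_minus (tail q)) in Hparts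
    by (apply ex_RInt_cont; auto; apply tail_density_cont).
  unfold minus, plus, opp in Hparts; simpl in Hparts; lra.
Qed.

Lemma abs_tail_density_le x m :
  0 <= x -> (forall t, x <= t -> tail q t <= m * q t) ->
  is_RInt_gen (fun t => Rabs t * q t) (at_point x) (Rbar_locally p_infty)
    (tail (fun t => Rabs t * q t) x) /\
  tail (fun t => Rabs t * q t) x <= (x + m) * tail q x.
Proof.
  intros Hx Hm.
  assert (Hm0 : 0 <= m).
  { pose proof (Hm x (Rle_refl x)); pose proof (tail_density x); pose proof (q_pos x); nra. }
  destruct (tail_spec (fun t => Rabs t * q t) x ((x + m) * tail q x) abs_density_cont)
    as [Hgen [_ [Hle _]]]; [| | split; auto].
  { intros t _; pose proof (q_pos t); pose proof (Rabs_pos t); nra. }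
  intros b Hb.
  assert (Hcq : forall c, forall t, continuous (fun t => c * q t) t)
    by (intros c t; apply (continuous_mult (fun _ => c) q); [apply continuous_const | apply density_cont]).
  rewrite (RInt_ext _ (fun t => x * q t + (t - x) * q t)).
  2:{ intros t Ht; rewrite Rmin_left, Rmax_right in Ht by lra.
      rewrite Rabs_pos_eq by lra.
      replace (t * q t) with (x * q t + (t - x) * q t) by ring; reflexivity. }
  rewrite (RInt_plus (fun t => x * q t) (fun t => (t - x) * q t)).
  2, 3: apply ex_RInt_cont; auto.
  2:{ intros t; apply (continuous_mult (fun t => t - x) q); [| apply density_cont].
      apply (ex_derive_continuous (K:=R_AbsRing) (V:=R_NormedModule)); auto_derive; exact I. }
  simpl; unfold plus; simpl.
  rewrite (RInt_scal_cont q x b x density_cont), RInt_shift_mul_density.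
  assert (Hint : RInt (tail q) x b <= m * RInt q x b).
  { rewrite <- (RInt_scal_cont q x b m density_cont).
    apply RInt_le; auto; try (apply ex_RInt_cont; auto; apply tail_density_cont).
    intros t Ht; apply Hm; lra. }
  pose proof (proj2 (proj2 (proj2 (tail_density x))) b Hb).
  pose proof (tail_density b).
  assert (0 <= (b - x) * tail q b) by (apply Rmult_le_pos; lra).
  assert (x * RInt q x b <= x * tail q x) by (apply Rmult_le_compat_l; lra).
  assert (m * RInt q x b <= m * tail q x) by (apply Rmult_le_compat_l; lra).
  lra.
Qed.

Lemma abs_tail_density_at_0 :
  is_RInt_gen (fun t => Rabs t * q t) (at_point 0) (Rbar_locally p_infty)
    (tail (fun t => Rabs t * q t) 0) /\
  tail (fun t => Rabs t * q t) 0 <= Z * tail q 0 ^ 2.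
Proof.
  destruct (abs_tail_density_le 0 (Z * tail q 0) (Rle_refl 0)) as [Hgen Hle].
  { intros t Ht; pose proof (tail_density_le_submult t Ht); lra. }
  split; [exact Hgen | lra].
Qed.

Lemma tail_density_bounds y E :
  0 <= y -> 0 <= k y -> E <= Z ->
  tail q y <= Z * q y /\
  Rabs (k y) * q y * tail q y <= q y ^ 2 /\
  is_RInt_gen (fun t => Rabs t * q t) (at_point y) (Rbar_locally p_infty)
    (tail (fun t => Rabs t * q t) y) /\
  tail (fun t => Rabs t * q t) y + E * tail q y <= min_inv Z (k y) * (y + 3 * Z) * q y.
Proof.
  intros Hy Hky HE.
  set (m := min_inv Z (k y)).
  assert (Hm := min_inv_bounds Z (k y) (norm_const_pos _ _ _ hq)); fold m in Hm.
  assert (Hmq := tail_density_le_min_inv y Hy Hky y (Rle_refl y)); fold m in Hmq.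
  destruct (abs_tail_density_le y m Hy (tail_density_le_min_inv y Hy Hky)) as [Hgen Habs]; auto.
  pose proof (tail_density y); pose proof (q_pos y); pose proof (rate_mul_tail_le y).
  split; [apply tail_density_le; auto |].
  split; [rewrite Rabs_pos_eq by auto; nra |].
  split; [exact Hgen |].
  assert (E * tail q y <= Z * tail q y) by (apply Rmult_le_compat_r; lra).
  assert ((y + m + Z) * tail q y <= (y + m + Z) * (m * q y)) by (apply Rmult_le_compat_l; lra).
  nra.
Qed.

End LogConcaveTail.

Section Density.

Variables (g : R -> R) (c0 : R).
Hypothesis g_diff : forall x, ex_derive g x.
Hypothesis c0_pos : 0 < c0.
Hypothesis udens_int : ex_RInt_gen (udens c0 g) (Rbar_locally m_infty) (Rbar_locally p_infty).
Hypothesis g_incr : forall s t, s <= t -> g s <= g t.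

Let g_cont t : continuous g t.
Proof. apply (ex_derive_continuous (K:=R_AbsRing) (V:=R_NormedModule)), g_diff. Qed.

Lemma Gint_deriv t : is_derive (Gint g) t (g t).
Proof.
  apply (is_derive_RInt g (RInt g 0) 0 t); [| apply g_cont].
  apply filter_forall; intros b; apply (RInt_correct g 0 b), ex_RInt_cont, g_cont.
Qed.

Lemma udens_cont t : continuous (udens c0 g) t.
Proof.
  apply (ex_derive_continuous (K:=R_AbsRing) (V:=R_NormedModule)).
  unfold udens; auto_derive; exists (g t); apply Gint_deriv.
Qed.

Lemma dens_deriv t : is_derive (dens c0 g) t (- (c0 * g t * dens c0 g t)).
Proof.
  unfold dens, udens; auto_derive; [exists (g t); apply Gint_deriv |].
  replace (Derive (fun x => Gint g x) t) with (g t)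
    by (symmetry; apply is_derive_unique, Gint_deriv).
  ring.
Qed.

Lemma Gint_superadd a b :
  (0 <= a /\ 0 <= b) \/ (a <= 0 /\ b <= 0) -> Gint g a + Gint g b <= Gint g (a + b).
Proof.
  intros Hab.
  assert (Hshift : Gint g (a + b) - Gint g a = RInt (fun s => g (a + s)) 0 b).
  { unfold Gint; rewrite <- (RInt_Chasles g 0 a (a + b)) by (apply ex_RInt_cont, g_cont).
    assert (Hlin := RInt_comp_lin g 1 a 0 b).
    replace (1 * 0 + a) with a in Hlin by ring; replace (1 * b + a) with (a + b) in Hlin by ring.
    rewrite <- Hlin by (apply ex_RInt_cont, g_cont).
    rewrite (RInt_ext (fun s => scal 1 (g (1 * s + a))) (fun s => g (a + s)))
      by (intros s _; unfold scal; simpl; unfold mult; simpl; rewrite Rmult_1_l; f_equal; ring).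
    simpl; unfold plus; simpl; ring. }
  assert (Hc : forall s, continuous (fun s => g (a + s)) s).
  { intros s; apply (continuous_comp (fun s => a + s) g); [| apply g_cont].
    apply (ex_derive_continuous (K:=R_AbsRing) (V:=R_NormedModule)); auto_derive; exact I. }
  assert (Hex : forall u v, ex_RInt (fun s => g (a + s)) u v /\ ex_RInt g u v)
    by (split; apply ex_RInt_cont; auto).
  assert (RInt g 0 b <= RInt (fun s => g (a + s)) 0 b).
  { destruct Hab as [[Ha Hb] | [Ha Hb]].
    - apply RInt_le; try apply Hex; auto; intros; apply g_incr; lra.
    - rewrite <- (opp_RInt_swap g), <- (opp_RInt_swap (fun s => g (a + s))) by apply Hex.
      unfold opp; simpl; apply Ropp_le_contravar.
      apply RInt_le; try apply Hex; auto; intros; apply g_incr; lra. }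
  unfold Gint in *; lra.
Qed.

Lemma Zc_spec :
  is_RInt_gen (udens c0 g) (Rbar_locally m_infty) (Rbar_locally p_infty) (Zc c0 g) /\
  (forall a b, a <= b -> RInt (udens c0 g) a b <= Zc c0 g) /\ 0 < Zc c0 g.
Proof.
  assert (Hgen : is_RInt_gen (udens c0 g) (Rbar_locally m_infty) (Rbar_locally p_infty) (Zc c0 g))
    by (apply (RInt_gen_correct (V:=R_CompleteNormedModule)), udens_int).
  assert (Hle := RInt_le_is_RInt_gen _ _ (fun t => Rlt_le _ _ (exp_pos _)) udens_cont Hgen).
  repeat split; auto.
  apply Rlt_le_trans with (RInt (udens c0 g) 0 1); [| apply Hle; lra].
  assert (Hlt := RInt_lt (fun _ => 0) (udens c0 g) 0 1 Rlt_0_1 (fun x _ => udens_cont x)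
                   (fun x _ => continuous_const 0 x) (fun x _ => exp_pos _)).
  rewrite RInt_const in Hlt; unfold scal in Hlt; simpl in Hlt; unfold mult in Hlt; simpl in Hlt.
  lra.
Qed.

Lemma dens_submult a b :
  (0 <= a /\ 0 <= b) \/ (a <= 0 /\ b <= 0) ->
  dens c0 g (a + b) <= Zc c0 g * dens c0 g a * dens c0 g b.
Proof.
  intros Hab.
  destruct Zc_spec as [_ [_ HZ]].
  assert (Hsup := Gint_superadd a b Hab).
  unfold dens, udens, cnorm.
  replace (Zc c0 g * (/ Zc c0 g * exp (- (c0 * Gint g a))) * (/ Zc c0 g * exp (- (c0 * Gint g b))))
    with (/ Zc c0 g * exp (- (c0 * (Gint g a + Gint g b)))).
  2:{ replace (- (c0 * (Gint g a + Gint g b))) with (- (c0 * Gint g a) + - (c0 * Gint g b)) by ring.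
      rewrite exp_plus; field; lra. }
  apply Rmult_le_compat_l; [left; apply Rinv_0_lt_compat; auto |].
  apply Rnot_lt_le; intros Hlt; apply exp_lt_inv in Hlt; nra.
Qed.

Lemma dens_pos t : 0 < dens c0 g t.
Proof.
  destruct Zc_spec as [_ [_ HZ]].
  apply Rmult_lt_0_compat; [apply Rinv_0_lt_compat; auto | apply exp_pos].
Qed.

Lemma dens_cont t : continuous (dens c0 g) t.
Proof.
  apply (ex_derive_continuous (K:=R_AbsRing) (V:=R_NormedModule)).
  eexists; apply dens_deriv.
Qed.

Lemma RInt_dens_le_1 a b : a <= b -> RInt (dens c0 g) a b <= 1.
Proof.
  intros Hab; destruct Zc_spec as [_ [Hle HZ]].
  unfold dens; rewrite (RInt_scal_cont _ a b _ udens_cont).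
  unfold cnorm; apply (Rmult_le_reg_l (Zc c0 g)); auto.
  specialize (Hle a b Hab).
  rewrite <- Rmult_assoc, Rinv_r by lra; lra.
Qed.

Lemma log_concave_dens :
  log_concave_density (dens c0 g) (fun t => c0 * g t) (Zc c0 g).
Proof.
  constructor.
  - exact dens_pos.
  - exact dens_deriv.
  - intros t; apply (continuous_mult (fun _ => c0) g); [apply continuous_const | apply g_cont].
  - intros s t Hst; apply Rmult_le_compat_l; [lra | auto].
  - apply Zc_spec.
  - intros x s Hx Hs; apply dens_submult; auto.
  - exact RInt_dens_le_1.
Qed.

Lemma log_concave_dens_reflect :
  log_concave_density (fun s => dens c0 g (- s)) (fun s => - (c0 * g (- s))) (Zc c0 g).
Proof.
  constructor.
  - intros t; apply dens_pos.
  - intros t.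
    replace (- (- (c0 * g (- t)) * dens c0 g (- t)))
      with (-1 * - (c0 * g (- t) * dens c0 g (- t))) by ring.
    apply (is_derive_comp (dens c0 g) Ropp); [apply dens_deriv |].
    auto_derive; [exact I | ring].
  - intros t; apply (ex_derive_continuous (K:=R_AbsRing) (V:=R_NormedModule)).
    auto_derive; apply g_diff.
  - intros s t Hst; assert (g (- t) <= g (- s)) by (apply g_incr; lra); nra.
  - apply Zc_spec.
  - intros x s Hx Hs; replace (- (x + s)) with (- x + - s) by ring.
    apply dens_submult; lra.
  - intros a b Hab; rewrite (RInt_reflect _ a b dens_cont).
    apply RInt_dens_le_1; lra.
Qed.

Local Notation dens_refl := (fun s => dens c0 g (- s)).

Lemma is_RInt_gen_abs_reflect y l :
  is_RInt_gen (fun t => Rabs t * dens_refl t) (at_point (- y)) (Rbar_locally p_infty) l ->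
  is_RInt_gen (fun t => Rabs t * dens c0 g t) (Rbar_locally m_infty) (at_point y) l.
Proof.
  intros H; apply is_RInt_gen_reflect; [apply (abs_density_cont _ _ _ log_concave_dens) |].
  apply (is_RInt_gen_ext (fun t => Rabs t * dens_refl t)); [| exact H].
  apply filter_forall; intros ab t _; rewrite Rabs_Ropp; reflexivity.
Qed.

Lemma cdf_eq_tail_reflect y : cdf c0 g y = tail dens_refl (- y).
Proof.
  apply (is_RInt_gen_unique (V:=R_CompleteNormedModule)), is_RInt_gen_reflect;
    [exact dens_cont | apply (tail_density _ _ _ log_concave_dens_reflect)].
Qed.

Lemma cdf_add_tail y : cdf c0 g y + tail (dens c0 g) y = 1.
Proof.
  destruct Zc_spec as [HZgen [_ HZ]].
  assert (Htotal : is_RInt_gen (dens c0 g) (Rbar_locally m_infty) (Rbar_locally p_infty) 1).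
  { replace 1 with (scal (cnorm c0 g) (Zc c0 g))
      by (unfold scal; simpl; unfold mult, cnorm; simpl; field; lra).
    exact (is_RInt_gen_scal _ (cnorm c0 g) _ HZgen). }
  assert (Hleft : is_RInt_gen (dens c0 g) (Rbar_locally m_infty) (at_point y) (cdf c0 g y)).
  { rewrite cdf_eq_tail_reflect; apply is_RInt_gen_reflect;
      [exact dens_cont | apply (tail_density _ _ _ log_concave_dens_reflect)]. }
  assert (Hright := proj1 (tail_density _ _ _ log_concave_dens y)).
  rewrite <- (is_RInt_gen_unique _ _ Htotal).
  exact (eq_sym (is_RInt_gen_unique _ _ (is_RInt_gen_Chasles _ y _ _ Hleft Hright))).
Qed.

Lemma EabsY_le_Zc : EabsY c0 g <= Zc c0 g.
Proof.
  destruct (abs_tail_density_at_0 _ _ _ log_concave_dens) as [HR HRle].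
  destruct (abs_tail_density_at_0 _ _ _ log_concave_dens_reflect) as [HL HLle].
  rewrite <- Ropp_0 in HL; apply is_RInt_gen_abs_reflect in HL.
  unfold EabsY; rewrite (is_RInt_gen_unique _ _ (is_RInt_gen_Chasles _ 0 _ _ HL HR)).
  pose proof (cdf_add_tail 0) as Hsum; rewrite cdf_eq_tail_reflect, Ropp_0 in Hsum.
  destruct (tail_density _ _ _ log_concave_dens 0) as [_ [HA _]].
  destruct (tail_density _ _ _ log_concave_dens_reflect 0) as [_ [HB _]].
  destruct Zc_spec as [_ [_ HZ]].
  assert (Zc c0 g * (tail dens_refl 0 ^ 2 + tail (dens c0 g) 0 ^ 2) <= Zc c0 g * 1)
    by (apply Rmult_le_compat_l; nra).
  simpl; unfold plus; simpl; rewrite Ropp_0; nra.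
Qed.

Lemma minfac_eq_min_inv x : minfac c0 g x = min_inv (Zc c0 g) (c0 * g x).
Proof.
  unfold minfac, min_inv, cnorm; rewrite Rinv_inv.
  destruct (Req_EM_T (g x) 0) as [Hg | Hg], (Req_EM_T (c0 * g x) 0) as [Hcg | Hcg]; auto.
  - rewrite Hg, Rmult_0_r in Hcg; lra.
  - apply Rmult_integral in Hcg; lra.
Qed.

Lemma Derive_dens x : Derive (dens c0 g) x = - (c0 * g x * dens c0 g x).
Proof. apply is_derive_unique, dens_deriv. Qed.

Lemma Derive_dens_ratio x :
  Derive (fun t => Derive (dens c0 g) t / dens c0 g t) x = - (c0 * Derive g x).
Proof.
  rewrite (Derive_ext _ (fun t => - (c0 * g t))).
  - apply is_derive_unique; auto_derive; [apply g_diff | rewrite Rmult_1_l; reflexivity].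
  - intros t; rewrite Derive_dens; pose proof (dens_pos t); field; lra.
Qed.

Hypothesis g_nonneg : forall t, 0 < t -> 0 <= g t.
Hypothesis g_nonpos : forall t, t <= 0 -> g t <= 0.

Lemma tail_bounds_pos x : 0 < x ->
  1 - cdf c0 g x <= Zc c0 g * dens c0 g x /\
  Rabs (c0 * g x) * dens c0 g x * (1 - cdf c0 g x) <= dens c0 g x ^ 2 /\
  Mfun c0 g x <= minfac c0 g x * (Rabs x + 3 * Zc c0 g) * dens c0 g x.
Proof.
  intros Hx.
  assert (Hk : 0 <= c0 * g x) by (apply Rmult_le_pos; [lra | auto]).
  destruct (tail_density_bounds _ _ _ log_concave_dens x (EabsY c0 g) ltac:(lra) Hk EabsY_le_Zc)
    as [Hmass [Hder [Hgen Hmoment]]].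
  replace (1 - cdf c0 g x) with (tail (dens c0 g) x) by (pose proof (cdf_add_tail x); lra).
  rewrite (Rabs_pos_eq x), minfac_eq_min_inv by lra.
  repeat split; auto.
  apply Rle_trans with (2 := Hmoment), Rle_trans with (1 := Rmin_r _ _).
  replace (EabsY_gt c0 g x) with (tail (fun t => Rabs t * dens c0 g t) x)
    by (symmetry; apply (is_RInt_gen_unique _ _ Hgen)).
  replace (1 - cdf c0 g x) with (tail (dens c0 g) x) by (pose proof (cdf_add_tail x); lra).
  apply Rle_refl.
Qed.

Lemma tail_bounds_nonpos x : x <= 0 ->
  cdf c0 g x <= Zc c0 g * dens c0 g x /\
  Rabs (c0 * g x) * dens c0 g x * cdf c0 g x <= dens c0 g x ^ 2 /\
  Mfun c0 g x <= minfac c0 g x * (Rabs x + 3 * Zc c0 g) * dens c0 g x.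
Proof.
  intros Hx.
  assert (Hk : 0 <= - (c0 * g (- - x)))
    by (rewrite Ropp_involutive; pose proof (g_nonpos x Hx); nra).
  destruct (tail_density_bounds _ _ _ log_concave_dens_reflect (- x) (EabsY c0 g)
              ltac:(lra) Hk EabsY_le_Zc) as [Hmass [Hder [Hgen Hmoment]]].
  cbv beta in *; rewrite !Ropp_involutive, Rabs_Ropp, min_inv_opp in *.
  rewrite cdf_eq_tail_reflect, (Rabs_left1 x), minfac_eq_min_inv by lra.
  repeat split; auto.
  apply Rle_trans with (2 := Hmoment), Rle_trans with (1 := Rmin_l _ _).
  replace (EabsY_le c0 g x) with (tail (fun t => Rabs t * dens_refl t) (- x))
    by (symmetry; apply (is_RInt_gen_unique _ _ (is_RInt_gen_abs_reflect x _ Hgen))).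
  rewrite cdf_eq_tail_reflect; apply Rle_refl.
Qed.

Lemma tail_bounds x :
  Rmin (cdf c0 g x) (1 - cdf c0 g x) <= Zc c0 g * dens c0 g x /\
  Rabs (c0 * g x) * dens c0 g x * Rmin (cdf c0 g x) (1 - cdf c0 g x) <= dens c0 g x ^ 2 /\
  Mfun c0 g x <= minfac c0 g x * (Rabs x + 3 * Zc c0 g) * dens c0 g x.
Proof.
  assert (Hmin_nonneg : 0 <= Rmin (cdf c0 g x) (1 - cdf c0 g x)).
  { pose proof (cdf_add_tail x); rewrite cdf_eq_tail_reflect in *.
    destruct (tail_density _ _ _ log_concave_dens x) as [_ [? _]].
    destruct (tail_density _ _ _ log_concave_dens_reflect (- x)) as [_ [? _]].
    apply Rmin_glb; lra. }
  assert (Hprod_nonneg : 0 <= Rabs (c0 * g x) * dens c0 g x)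
    by (apply Rmult_le_pos; [apply Rabs_pos | left; apply dens_pos]).
  destruct (Rlt_le_dec 0 x) as [Hx | Hx].
  - destruct (tail_bounds_pos x Hx) as [Hmass [Hder Hmoment]].
    pose proof (Rmin_r (cdf c0 g x) (1 - cdf c0 g x)).
    split; [lra | split; [| exact Hmoment]].
    apply Rle_trans with (2 := Hder), Rmult_le_compat_l; auto.
  - destruct (tail_bounds_nonpos x Hx) as [Hmass [Hder Hmoment]].
    pose proof (Rmin_l (cdf c0 g x) (1 - cdf c0 g x)).
    split; [lra | split; [| exact Hmoment]].
    apply Rle_trans with (2 := Hder), Rmult_le_compat_l; auto.
Qed.

End Density.

Lemma le_mul_Rmax (M K p d c : R) :
  0 < p -> 0 <= K -> 0 <= d -> M <= K * p -> K * Rmax 1 d <= c ->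
  M * d <= c * p /\ M <= c * p.
Proof.
  intros Hp HK Hd HM Hc.
  pose proof (Rmax_l 1 d); pose proof (Rmax_r 1 d).
  assert (K * d <= c /\ K <= c) as [Hcd Hc1] by (split; nra).
  split; [| nra].
  destruct (Rle_lt_dec 0 M); [| nra].
  apply Rle_trans with (K * p * d); [apply Rmult_le_compat_r; lra | nra].
Qed.

Theorem lemma4p2 (g : R -> R) (c0 c2 : R)
  (Hdiff : forall x, ex_derive g x)
  (Hc0 : 0 < c0)
  (Hint : ex_RInt_gen (udens c0 g) (Rbar_locally m_infty) (Rbar_locally p_infty))
  (H1mono : forall s t, s <= t -> g s <= g t)
  (H1pos : forall t, 0 < t -> 0 <= g t)
  (H1neg : forall t, t <= 0 -> g t <= 0)
  (H2 : forall x,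
      minfac c0 g x * (Rabs x + 3 / cnorm c0 g) * Rmax 1 (Rmult c0 (Rabs (Derive g x))) <= c2) :
  forall x : R,
    Rmin (1 - cdf c0 g x) (cdf c0 g x) <= (/ cnorm c0 g) * dens c0 g x /\
    Rabs (Derive (dens c0 g) x) * Rmin (cdf c0 g x) (1 - cdf c0 g x)
      <= 1 * (dens c0 g x) ^ 2 /\
    Mfun c0 g x * Rabs (Derive (fun t => Derive (dens c0 g) t / dens c0 g t) x)
      <= c2 * dens c0 g x /\
    Mfun c0 g x <= c2 * dens c0 g x.
Proof.
  intros x.
  destruct (tail_bounds g c0 Hdiff Hc0 Hint H1mono H1pos H1neg x) as [Hmass [Hder Hmoment]].
  assert (Hp := dens_pos g c0 Hdiff Hint x).
  assert (HZ : / cnorm c0 g = Zc c0 g) by apply Rinv_inv.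
  assert (Hminfac : 0 <= minfac c0 g x).
  { rewrite (minfac_eq_min_inv g c0 Hc0).
    apply min_inv_bounds, (Zc_spec g c0 Hdiff Hint). }
  specialize (H2 x); unfold Rdiv in H2; rewrite HZ in H2.
  rewrite (Derive_dens g c0 Hdiff), (Derive_dens_ratio g c0 Hdiff Hint), HZ, !Rabs_Ropp.
  rewrite (Rabs_mult c0), (Rabs_pos_eq c0) by lra.
  split; [rewrite Rmin_comm; exact Hmass |].
  split; [rewrite (Rabs_mult _ (dens c0 g x)), (Rabs_pos_eq (dens c0 g x)); lra |].
  apply (le_mul_Rmax _ (minfac c0 g x * (Rabs x + 3 * Zc c0 g))); auto.
  - destruct (Zc_spec g c0 Hdiff Hint) as [_ [_ HZpos]].
    pose proof (Rabs_pos x); apply Rmult_le_pos; lra.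
  - apply Rmult_le_pos; [lra | apply Rabs_pos].
Qed.
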